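(* Let the plant transfer function be proper, with the sum of its poles negative (so $a_{n-1}>0$) and its first nonzero Markov parameter positive (so $b_{n-1}\ge0$). Suppose the smooth feedback system $\dot\zeta=A\zeta-B\tanh(\gamma C\zeta)$ possesses a periodic orbit that has a finite period and a finite number of crossings of the hyperplane $\{Cx=0\}$, all transversal. Then, as the gain $\gamma$ is taken to infinity, the linearized flow around this periodic orbit shrinks volume in phase space.
   Context: The plant is $\frac{b(s)}{a(s)}=\frac{b_{n-1}s^{n-1}+\dots+b_0}{s^n+a_{n-1}s^{n-1}+\dots+a_0}$, with realization: $A$ with $A_{i+1,i}=1$ ($i=1,\dots,n-1$), last column $(-a_0,\dots,-a_{n-1})^T$, other entries zero; $B=(b_0,\dots,b_{n-1})^T$; $C=(0,\dots,0,1)$. The linearized flow around a periodic orbit $p(t;\gamma)$ is $\dot\delta=\bigl[A-\frac{\gamma}{\cosh^2(\gamma Cp(t;\gamma))}BC\bigr]\delta$; volume shrinkage over one period means the determinant of its monodromy matrix $\Phi(T_{\rm period},0)$ is less than one. Transversal crossing at $t_0$ means $C\frac{d}{dt}p(t_0;\gamma)\neq0$. *)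

From HB Require Import structures.
From mathcomp Require Import all_boot all_order all_algebra.
From mathcomp Require Import all_classical all_reals all_analysis.
Set Implicit Arguments. Unset Strict Implicit. Unset Printing Implicit Defensive.
Import Order.TTheory GRing.Theory Num.Theory.
Import numFieldNormedType.Exports.
Local Open Scope classical_set_scope.
Local Open Scope ring_scope.

Section Lure.
Variable R : realType.

Definition coshR (x : R) : R := (expR x + expR (- x)) / 2.
Definition tanhR (x : R) : R := (expR x - expR (- x)) / (expR x + expR (- x)).

Variable n : nat.
(* plant of order n.+1 (i.e. any order >= 1);
   a i = a_i, b i = b_i for i = 0..n *)
Variables a b : 'I_n.+1 -> R.

(* companion realization: A_{i+1,i} = 1, last column (-a_0,...,-a_n)^T *)
Definition Amat : 'M[R]_n.+1 :=
  \matrix_(i, j) ((if nat_of_ord i == (nat_of_ord j).+1 then 1 else 0)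
                  + (if j == ord_max then - a i else 0)).
Definition Bvec : 'cV[R]_n.+1 := \col_i b i.
Definition Cvec : 'rV[R]_n.+1 := \row_j (if j == ord_max then 1 else 0).

Definition Cout (x : 'cV[R]_n.+1) : R := (Cvec *m x) 0 0.

Definition markov (k : nat) : R := (Cvec *m (Amat ^+ k) *m Bvec) 0 0.
Definition first_nonzero_markov_pos : Prop :=
  exists k, (forall j, (j < k)%N -> markov j = 0) /\ 0 < markov k.

Definition lure_field (gamma : R) (z : 'cV[R]_n.+1) : 'cV[R]_n.+1 :=
  Amat *m z - tanhR (gamma * Cout z) *: Bvec.

Definition periodic_orbit (gamma : R) (p : R -> 'cV[R]_n.+1) (Tp : R) : Prop :=
  [/\ forall t, derivable p t 1,
      forall t, derive1 p t = lure_field gamma (p t),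
      0 < Tp,
      forall t, p (t + Tp) = p t &
      forall s, 0 < s < Tp -> exists t, p (t + s) <> p t].

Definition crossing_times (p : R -> 'cV[R]_n.+1) (Tp : R) : set R :=
  [set t | 0 <= t < Tp /\ Cout (p t) = 0].
Definition finite_transversal_crossings (p : R -> 'cV[R]_n.+1) (Tp : R) : Prop :=
  finite_set (crossing_times p Tp) /\
  forall t, crossing_times p Tp t -> Cout (derive1 p t) <> 0.

Definition linearized (gamma : R) (p : R -> 'cV[R]_n.+1) (t : R) : 'M[R]_n.+1 :=
  Amat - (gamma / (coshR (gamma * Cout (p t)) ^+ 2)) *: (Bvec *m Cvec).

Definition transition_matrix (gamma : R) (p : R -> 'cV[R]_n.+1)
    (Phi : R -> 'M[R]_n.+1) : Prop :=
  [/\ forall t, derivable Phi t 1,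
      forall t, derive1 Phi t = linearized gamma p t *m Phi t &
      Phi 0 = 1%:M].

End Lure.

From Pilot Require Import Defs.
From HB Require Import structures.
From mathcomp Require Import all_boot all_order all_algebra.
From mathcomp Require Import all_classical all_reals all_analysis.
From mathcomp Require Import perm ring.
Import Order.TTheory GRing.Theory Num.Theory.
Import numFieldNormedType.Exports.
Local Open Scope classical_set_scope.
Local Open Scope ring_scope.

(* By the Jacobi-Liouville formula, det Phi grows at the rate
   tr(A - k(t) B C) = - a_{n-1} - k(t) b_{n-1}, with k(t) = gamma / cosh^2 >= 0,
   which is at most - a_{n-1} < 0 whenever gamma >= 0 and b_{n-1} >= 0.  Hence
   |det Phi(T)| <= exp(- a_{n-1} T) < 1 for every T > 0: of the orbit
   hypotheses only the positivity of the period is needed, and of gamma -> +oo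
   only gamma >= 0.  Here a_{n-1}, b_{n-1} are [a ord_max], [b ord_max]. *)

Lemma det_row_mulmx (R : comPzRingType) k (L M : 'M[R]_k) i :
  \det (\matrix_(j, l) if j == i then (L *m M) j l else M j l) = L i i * \det M.
Proof.
set A := \matrix_(j, l) _.
have cofA l : cofactor A i l = cofactor M i l.
  rewrite /cofactor; congr (_ * \det _); apply/matrixP => r c.
  by rewrite !mxE eq_sym (negbTE (neq_lift i r)).
have rowM m : \sum_l L i m * M m l * cofactor M i l = L i m * (\det M *+ (m == i)).
  have := congr1 (fun A : 'M[R]_k => A m i) (mul_mx_adj M); rewrite !mxE => <-.
  rewrite big_distrr; apply: eq_bigr => l _.
  by rewrite mxE -mulrA.
rewrite (expand_det_row _ i).
under eq_bigr => l _ do rewrite cofA !mxE eqxx big_distrl.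
rewrite exchange_big /=; under eq_bigr do rewrite rowM.
by rewrite (bigD1 i) //= eqxx mulr1n big1 ?addr0 // => m /negbTE ->; rewrite mulr0.
Qed.

Section Jacobi.
Variable R : realFieldType.
Implicit Types t : R.

Lemma is_derive_sum_fin (I : finType) (h : I -> R -> R) (dh : I -> R) t :
  (forall i, is_derive t 1 (h i) (dh i)) ->
  is_derive t 1 (\sum_i h i) (\sum_i dh i).
Proof.
by move=> H; elim/big_ind2 : _ => // *; [exact: is_derive_cst|exact: is_deriveD].
Qed.

Lemma is_derive_prod k (f : 'I_k -> R -> R) (df : 'I_k -> R) t :
  (forall i, is_derive t 1 (f i) (df i)) ->
  is_derive t 1 (\prod_i f i)
    (\sum_i \prod_j (if j == i then df j else f j t)).
Proof.
elim: k f df => [|k IH] f df H.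
  by rewrite big_ord0 big_ord0; exact: is_derive_cst.
have widen_max (j : 'I_k) : (widen_ord (leqnSn k) j == ord_max) = false.
  by apply/negbTE; rewrite -val_eqE /= neq_ltn ltn_ord.
rewrite big_ord_recr /=.
apply: (is_derive_eq (is_deriveM (IH _ _ (fun i => H _)) (H ord_max))).
rewrite fct_prodE [RHS]big_ord_recr /= addrC; congr (_ + _).
  rewrite -[_ *: _]/(_ * _) big_ord_recr /= eqxx; congr (_ * _).
  by apply: eq_bigr => j _; rewrite widen_max.
rewrite -[_ *: _]/(_ * _) big_distrr /=; apply: eq_bigr => i _.
by rewrite big_ord_recr /= eq_sym widen_max mulrC; congr (_ * _).
Qed.

Lemma is_derive_det k (M : R -> 'M[R]_k) (dM : 'M[R]_k) t :
  (forall i j, is_derive t 1 (fun s => M s i j) (dM i j)) ->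
  is_derive t 1 (fun s => \det (M s))
    (\sum_i \det (\matrix_(j, l) if j == i then dM j l else M t j l)).
Proof.
move=> dMij; rewrite [X in is_derive _ _ X](_ : _ = \sum_(s : 'S_k)
    (fun x => (-1) ^+ s * \prod_i M x i (s i))); last by rewrite fct_sumE.
apply: is_derive_eq.
  apply: is_derive_sum_fin => s.
  apply: is_deriveZ; rewrite -fct_prodE.
  by apply: is_derive_prod => i; exact: dMij.
under eq_bigr => s _ do rewrite /= -[_ *: _]/(_ * _) big_distrr.
rewrite exchange_big; apply: eq_bigr => i _; apply: eq_bigr => s _ /=.
by congr (_ * _); apply: eq_bigr => j _; rewrite !mxE; case: eqP.
Qed.

Lemma is_derive_det_mulmx k (M : R -> 'M[R]_k) (L : 'M[R]_k) t :
  derivable M t 1 -> derive1 M t = L *m M t ->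
  is_derive t 1 (fun s => \det (M s)) (\tr L * \det (M t)).
Proof.
move=> dM M'E.
have dMij i j : is_derive t 1 (fun s => M s i j) ((L *m M t) i j).
  have /derivable_mxP/(_ i j) dij := dM.
  by apply: (is_derive_eq (derivableP dij)); rewrite -M'E derive1E derive_mx // mxE.
apply: (is_derive_eq (is_derive_det _ _ _ _ dMij)).
by rewrite /mxtrace big_distrl; apply: eq_bigr => i _; exact: det_row_mulmx.
Qed.

End Jacobi.

Lemma norm_le_expR_of_derive (R : realType) (f c : R -> R) (al T : R) :
  (forall t : R, is_derive t 1 f (c t * f t)) -> (forall t, c t <= - al) -> 0 <= T ->
  `|f T| <= `|f 0| * expR (- (al * T)).
Proof.
move=> df cle T0.
(* Squaring removes the unknown sign of [f]: [g' = 2 (c + al) g <= 0]. *)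
pose w s := expR (al * s).
pose g s := (f s * w s) ^+ 2.
have dw (t : R) : is_derive t 1 w (al * w t).
  have := is_derive1_comp (is_derive_expR _) (is_deriveZ al (is_derive_id t 1)).
  rewrite -[_ *: 1]/(al * 1) mulr1 mulrC; exact.
have dg (t : R) : is_derive t 1 g (2 * (c t + al) * g t).
  apply: is_derive_eq.
  rewrite /g; move: (f t) (w t) (c t) => x y z.
  rewrite -![(x * y) *: _]/(_ * _) -![x *: _]/(_ * _) -![y *: _]/(_ * _).
  ring.
have gT0 : g T <= g 0.
  apply: (ler0_derive1_le_cc (a := 0) (b := T)); last exact: T0.
  - by move=> x _; case: (dg x).
  - move=> x _; rewrite derive1E; case: (dg x) => _ ->.
    by rewrite mulr_le0_ge0 ?sqr_ge0 // pmulr_rle0 // -lerBrDr sub0r.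
  - apply: continuous_subspaceT => x.
    by apply/differentiable_continuous/derivable1_diffP; case: (dg x).
  - by rewrite in_itv /= lexx T0.
  - by rewrite in_itv /= lexx T0.
have normK x : `|x| ^+ 2 = x ^+ 2 :> R by rewrite -normrX ger0_norm ?sqr_ge0.
rewrite expRN ler_pdivlMr ?expR_gt0 // -ler_sqr ?nnegrE ?mulr_ge0 ?expR_ge0 //.
rewrite -[expR _]ger0_norm ?expR_ge0 // -normrM !normK.
by move: gT0; rewrite /g /w mulr0 expR0 mulr1.
Qed.

Section LureSystem.
Variables (R : realType) (n : nat) (a b : 'I_n.+1 -> R).

Lemma Cvec_mulmx_Bvec : (Cvec R n *m Bvec b) 0 0 = b ord_max.
Proof.
rewrite mxE (bigD1 ord_max) //= big1 ?addr0 => [|j /negbTE nj].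
  by rewrite !mxE eqxx mul1r.
by rewrite !mxE nj mul0r.
Qed.

Lemma markov0 : Defs.markov a b 0 = b ord_max.
Proof. by rewrite /Defs.markov expr0 mulmx1 Cvec_mulmx_Bvec. Qed.

Lemma first_nonzero_markov_pos_ge0 : first_nonzero_markov_pos a b -> 0 <= b ord_max.
Proof.
case=> [[|k]] [mk0 mk_gt0]; first by rewrite -markov0 ltW.
by rewrite -markov0 mk0.
Qed.

Lemma mxtrace_Amat : \tr (Amat a) = - a ord_max.
Proof.
rewrite /mxtrace (bigD1 ord_max) //= big1 ?addr0 => [|i /negbTE ni];
  by rewrite !mxE eqn_leq ltnn andbF ?eqxx ?ni add0r.
Qed.

Lemma mxtrace_linearized gamma p t :
  \tr (linearized a b gamma p t) =
  - a ord_max - gamma / coshR (gamma * Cout (p t)) ^+ 2 * b ord_max.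
Proof.
rewrite /linearized raddfB /= mxtraceZ mxtrace_mulC mxtrace_Amat.
by rewrite /mxtrace big_ord1 Cvec_mulmx_Bvec.
Qed.

Lemma det_transition_lt1 gamma p Phi T :
  0 < a ord_max -> 0 <= b ord_max -> 0 <= gamma -> 0 < T ->
  transition_matrix a b gamma p Phi -> \det (Phi T) < 1.
Proof.
move=> a_gt0 b_ge0 gamma_ge0 T_gt0 [dPhi Phi' Phi0].
have det_le : `|\det (Phi T)| <= expR (- (a ord_max * T)).
  rewrite -[expR _]mul1r -normr1 -(det1 R n.+1) -Phi0.
  apply: (@norm_le_expR_of_derive R (fun t => \det (Phi t))
    (fun t => \tr (linearized a b gamma p t))) (ltW T_gt0) => t.
    exact: is_derive_det_mulmx (dPhi t) (Phi' t).
  rewrite mxtrace_linearized lerBlDr lerDl.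
  by rewrite mulr_ge0 // divr_ge0 ?sqr_ge0.
apply: le_lt_trans (ler_norm _) (le_lt_trans det_le _).
by rewrite expR_lt1 oppr_lt0 mulr_gt0.
Qed.

End LureSystem.

Theorem mainTheorem17 (R : realType) (n : nat) (a b : 'I_n.+1 -> R)
    (p : R -> R -> 'cV[R]_n.+1) (Tp : R -> R) :
  0 < a ord_max ->
  first_nonzero_markov_pos a b ->
  (\forall gamma \near +oo,
      periodic_orbit a b gamma (p gamma) (Tp gamma) /\
      finite_transversal_crossings (p gamma) (Tp gamma)) ->
  \forall gamma \near +oo,
    forall Phi : R -> 'M[R]_n.+1,
      transition_matrix a b gamma (p gamma) Phi -> \det (Phi (Tp gamma)) < 1.
Proof.
move=> a_gt0 /first_nonzero_markov_pos_ge0 b_ge0 orbit.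
near=> gamma => Phi.
have [[_ _ Tp_gt0 _ _] _] : periodic_orbit a b gamma (p gamma) (Tp gamma) /\
  finite_transversal_crossings (p gamma) (Tp gamma) by near: gamma.
have gamma_ge0 : 0 <= gamma by near: gamma; apply: nbhs_pinfty_ge; rewrite num_real.
exact: det_transition_lt1.
Unshelve. all: by end_near.
Qed.
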